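(* Let $n\ge 1$ and let $B^n=\{x\in\mathbb{R}^n : \|x\|\le 1\}$ be the closed unit ball. There is no decomposition of $B^n$ into sets of diameter less than $2/\sqrt{n}$ such that at most $n$ of the sets meet at any point.
   Context: A decomposition of a space $X$ is a locally finite collection (for compact $X$, a finite collection) of closed subsets of $X$ (the pieces) with pairwise disjoint interiors whose union is $X$. Diameters are Euclidean. *)

From HB Require Import structures.
From mathcomp Require Import all_boot all_order all_algebra.
From mathcomp Require Import all_classical all_reals all_analysis.
Set Implicit Arguments. Unset Strict Implicit. Unset Printing Implicit Defensive.
Import Order.TTheory GRing.Theory Num.Theory.
Import numFieldNormedType.Exports.
Local Open Scope classical_set_scope.
Local Open Scope ring_scope.

Definition enorm (R : realType) (n : nat) (x : 'rV[R]_n) : R :=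
  Num.sqrt (\sum_(i < n) (x ord0 i) ^+ 2).

Definition edist (R : realType) (n : nat) (x y : 'rV[R]_n) : R := enorm (x - y).

Definition unit_ball (R : realType) (n : nat) : set 'rV[R]_n :=
  [set x | enorm x <= 1].

Definition closed_in (R : realType) (n : nat) (X A : set 'rV[R]_n) : Prop :=
  exists C : set 'rV[R]_n, @closed 'rV[R]_n C /\ A = X `&` C.

Definition rel_interior (R : realType) (n : nat) (X A : set 'rV[R]_n)
  : set 'rV[R]_n :=
  [set x | A x /\ exists2 e : R, 0 < e &
     forall y, X y -> edist x y < e -> A y].

Definition diam_lt (R : realType) (n : nat) (A : set 'rV[R]_n) (c : R) : Prop :=
  exists2 d : R, d < c & forall x y, A x -> A y -> edist x y <= d.

Definition decomposition (R : realType) (n : nat) (I : finType)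
  (X : set 'rV[R]_n) (P : I -> set 'rV[R]_n) : Prop :=
  [/\ forall i, closed_in X (P i),
      forall i j, i != j -> rel_interior X (P i) `&` rel_interior X (P j) = set0,
      (forall i, P i `<=` X) &
      (forall x, X x -> exists i, P i x)].

Definition meet_count (R : realType) (n : nat) (I : finType)
  (P : I -> set 'rV[R]_n) (x : 'rV[R]_n) : nat :=
  #|[set i : I | `[< P i x >] ]%SET|.

From Pilot Require Import Defs.
From HB Require Import structures.
From mathcomp Require Import all_boot all_order all_algebra.
From mathcomp Require Import all_classical all_reals all_analysis.
From mathcomp Require Import perm zify ring lra.
Set Implicit Arguments. Unset Strict Implicit. Unset Printing Implicit Defensive.
Import Order.TTheory GRing.Theory Num.Theory.
Import numFieldNormedType.Exports.

(** Lebesgue's covering theorem: if finitely many closed sets cover the cube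
    [-a, a]^n and none of them meets two opposite faces, then some point lies
    in n + 1 of them.  The cube of half-side 1/sqrt n lies in the unit ball and
    opposite faces are 2/sqrt n apart, so the pieces of the decomposition,
    intersected with the cube, form such a cover.

    Lebesgue's theorem follows from Sperner's lemma on Kuhn's triangulation of
    a grid finer than a Lebesgue number of the cover: a grid point is labelled
    by the first k such that the set chosen for it misses the face x_k = -a.
    The n + 1 sets chosen at the vertices of a fully labelled simplex are
    distinct and all meet a small ball, hence share a point of the cube.
    Sperner's lemma is the door-to-door parity argument: doors in the interior
    are paired up by pivoting, and those on the boundary of the cube are the
    fully labelled simplices of a face, one dimension lower. *)

Lemma fixfree_involution_card_even (T : finType) (g : T -> T) (A : {set T}) :
  {in A, forall x, g x \in A} -> {in A, forall x, g (g x) = x} ->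
  {in A, forall x, g x != x} -> ~~ odd #|A|.
Proof.
move=> gA gK g_neq.
pose B := [set x in A | enum_rank x < enum_rank (g x)].
have sBA : B \subset A by apply/fintype.subsetP => x /setIdP[].
have g_inj : {in B &, injective g}.
  by move=> x y /setIdP[xA _] /setIdP[yA _] gxy; rewrite -(gK x) // gxy gK.
have AminusB : A :\: B = g @: B.
  apply/setP => x; apply/setDP/imsetP => [[xA xNB] | [y /setIdP[yA lt_y] ->]].
    exists (g x); last by rewrite gK.
    rewrite inE gA //= gK //; move: xNB; rewrite inE xA /=.
    case: ltngtP => // /val_inj/enum_rank_inj x_gx.
    by have := g_neq x xA; rewrite -x_gx eqxx.
  by rewrite inE gA //= gK // ltnNge (ltnW lt_y).
rewrite -(cardsID B A) (finset.setIidPr sBA) AminusB card_in_imset //.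
by rewrite addnn odd_double.
Qed.

Lemma odd_cardE (T : finType) (P : pred T) :
  odd #|[set x | P x]| = \big[addb/false]_x P x.
Proof.
rewrite -sum1_card big_mkcond /= (big_morph odd oddD (erefl : odd 0 = false)).
by apply: eq_bigr => x _; rewrite inE; case: (P x).
Qed.

Lemma lift_perm_surj n (i j : 'I_n.+1) (s : 'S_n.+1) :
  s i = j -> exists q : 'S_n, s = lift_perm i j q.
Proof.
move=> sij.
have s_lift k : j != s (lift i k) by rewrite -sij (inj_eq perm_inj) neq_lift.
pose f k := odflt k (unlift j (s (lift i k))).
have fK k : lift j (f k) = s (lift i k).
  by rewrite /f; have [k' -> ->] := unlift_some (s_lift k).
have f_inj : injective f.
  by move=> x y /(congr1 (lift j)); rewrite !fK => /perm_inj/lift_inj.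
exists (perm f_inj); apply/permP => k; case: (unliftP i k) => [k' | ] ->.
  by rewrite lift_perm_lift permE fK.
by rewrite lift_perm_id.
Qed.

Section DoorParity.
Variables (n : nat) (f : 'I_n.+1 -> nat).

Definition door (j : 'I_n.+1) := [forall l : 'I_n, exists i, (i != j) && (f i == l)].
Definition fully_labelled := [forall l : 'I_n.+1, exists i, f i == l].

Hypothesis f_le : forall i, f i <= n.

Let g (i : 'I_n.+1) : 'I_n.+1 := inord (f i).
Let gE i : (g i : nat) = f i. Proof. by rewrite inordK // ltnS. Qed.

Let door_image j : door j -> g @: [set~ j] = [set~ ord_max].
Proof.
move=> /forallP Dj.
have sub : [set~ ord_max] \subset g @: [set~ j].
  apply/fintype.subsetP => x; rewrite !inE => x_max.
  have x_lt : x < n by move: (ltn_ord x) x_max; rewrite -(inj_eq val_inj) /=; lia.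
  have /existsP [i /andP [ij /eqP fi]] := Dj (Ordinal x_lt).
  by apply/imsetP; exists i; rewrite ?inE //; apply/val_inj; rewrite /= gE fi.
apply/esym/eqP; rewrite eqEcard sub (leq_trans (leq_imset_card _ _)) //.
by rewrite !cardsC1.
Qed.

Lemma door_injective j : door j -> {in [set~ j] &, injective f}.
Proof.
move=> Dj x y xj yj fxy.
have /imset_injP g_inj : #|g @: [set~ j]| == #|[set~ j]|.
  by rewrite door_image // !cardsC1.
by apply: g_inj => //; apply: val_inj; rewrite /= !gE.
Qed.

Lemma door_labels_lt j i : door j -> i != j -> f i < n.
Proof.
move=> /door_image Dj ij; rewrite -gE.
have : g i \in [set~ ord_max] by rewrite -Dj imset_f // !inE.
by rewrite !inE -(inj_eq val_inj) /=; move: (ltn_ord (g i)); lia.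
Qed.

Lemma full_doors : fully_labelled -> exists j0, [set j | door j] = [set j0].
Proof.
move=> /forallP full.
have [j0 /eqP fj0] := existsP (full ord_max).
exists j0; apply/setP => j; rewrite !inE; apply/idP/eqP => [Dj | ->].
  apply/eqP; apply: contraT => jj0.
  by have := door_labels_lt Dj (_ : j0 != j); rewrite eq_sym fj0 ltnn => /(_ jj0).
apply/forallP => l; have [i /eqP fi] := existsP (full (widen_ord (leqnSn n) l)).
apply/existsP; exists i; rewrite fi eqxx andbT.
apply: contraTneq (ltn_ord l) => ij0.
by move: fi; rewrite ij0 fj0 /= => <-; rewrite ltnn.
Qed.

Lemma not_full_doors j : ~~ fully_labelled -> door j ->
  exists2 j', j' != j & [set j | door j] = [set j; j'].
Proof.
move=> not_full Dj.
have fj_lt : f j < n.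
  rewrite ltn_neqAle f_le andbT; apply: contra not_full => /eqP fj.
  apply/forallP => l; have [l_n | l_lt] := eqVneq (l : nat) n.
    by apply/existsP; exists j; rewrite fj l_n.
  have l_lt' : l < n by move: (ltn_ord l) l_lt; lia.
  have [i /andP [_ fi]] := existsP (forallP Dj (Ordinal l_lt')).
  by apply/existsP; exists i.
have [j' /andP [j'j /eqP /= fj']] := existsP (forallP Dj (Ordinal fj_lt)).
exists j' => //; apply/setP => k; rewrite !inE.
apply/idP/idP => [Dk | /orP [] /eqP -> //].
  apply: contraT; rewrite negb_or => /andP [kj kj'].
  by move: j'j; rewrite (door_injective Dk _ _ fj') ?eqxx // !inE eq_sym.
apply/forallP => l; have [i /andP [ij fi]] := existsP (forallP Dj l).
apply/existsP; have [ij' | ij'] := eqVneq i j'.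
  by exists j; rewrite eq_sym j'j -fj' -ij'.
by exists i; rewrite ij'.
Qed.

Lemma odd_doors : odd #|[set j | door j]| = fully_labelled.
Proof.
have [full | not_full] := boolP fully_labelled.
  by have [j0 ->] := full_doors full; rewrite cards1.
have [-> | [j]] := set_0Vmem [set j | door j]; first by rewrite cards0.
rewrite inE => /(not_full_doors not_full) [j' j'j ->].
by rewrite cards2 eq_sym j'j.
Qed.

End DoorParity.

Section KuhnTriangulation.
Variable M : nat.

(* Kuhn's triangulation of the grid {0, ..., M + 1}^n: for a base point v and
   a permutation p of the coordinates, the simplex (v, p) has the vertices
   [vertex v p j], 0 <= j <= n, each obtained from the previous one by
   increasing coordinate p^-1 (j - 1). *)
Definition vertex n (v : {ffun 'I_n -> 'I_M.+1}) (p : 'S_n) (j : nat) :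
  {ffun 'I_n -> nat} := [ffun k => v k + (p k < j)].

Definition in_grid n (u : {ffun 'I_n -> nat}) := forall k, u k <= M.+1.

Lemma vertex_in_grid n v p j : in_grid (@vertex n v p j).
Proof. by move=> k; rewrite ffunE; move: (ltn_ord (v k)); case: (_ < j); lia. Qed.

Definition sperner_labelling n (lab : {ffun 'I_n -> nat} -> nat) :=
  [/\ forall u, in_grid u -> lab u <= n,
      forall u (k : 'I_n), in_grid u -> u k = 0 -> lab u != k &
      forall u (k : 'I_n), in_grid u -> u k = M.+1 -> lab u <= k].

Definition simplex_labels n (lab : {ffun 'I_n -> nat} -> nat) v p (i : 'I_n.+1) :=
  lab (@vertex n v p i).

Section Pivot.
Variable n' : nat.
Local Notation n := n'.+1.
Local Notation facet := (({ffun 'I_n -> 'I_M.+1} * 'S_n) * 'I_n.+1)%type.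

Definition adj_swap (j : nat) : 'S_n := tperm (inord j.-1) (inord j).
Definition shift : 'S_n := perm (@ordS_inj n).

Lemma shiftE k : (shift k : nat) = if k == n' :> nat then 0 else k.+1.
Proof.
rewrite permE /=; case: eqP => [-> | k_n']; first by rewrite modnn.
by rewrite modn_small //; move: (ltn_ord k) k_n'; lia.
Qed.

Lemma shiftVE k : ((shift^-1)%g k : nat) = if k == 0 :> nat then n' else k.-1.
Proof.
have shift_pred : shift (ord_pred k) = k by rewrite permE ord_predK.
rewrite -{1}shift_pred permK /=.
case: eqP => [-> | k_n0]; first by rewrite add0n modn_small.
rewrite -subn1 addnC -addnBA ?modnDl ?modn_small ?subn1 //.
all: by move: (ltn_ord k) k_n0; lia.
Qed.

Lemma adj_swap_lt j x (i : nat) : 0 < j < n -> i != j -> (adj_swap j x < i) = (x < i).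
Proof.
move=> /andP [j_gt0 j_lt] ij; rewrite /adj_swap.
case: tpermP => [-> | -> | //]; rewrite !inordK; move: ij; lia.
Qed.

(* A facet is a simplex together with the vertex opposite to it.  When the
   facet is not contained in the boundary of the cube ([inner_facet]), [pivot]
   returns the other simplex containing it, with its opposite vertex. *)
Definition pivot (t : facet) : facet :=
  let: ((v, p), j) := t in
  if 0 < j < n then ((v, p * adj_swap j), j)%g
  else if j == 0 :> nat then
    (([ffun k : 'I_n => inord (v k + (p k == 0 :> nat))], p * shift^-1), ord_max)%g
  else (([ffun k : 'I_n => inord (v k - (p k == n' :> nat))], p * shift), ord0)%g.

Definition inner_facet (t : facet) : bool :=
  let: ((v, p), j) := t in
  [|| 0 < j < n,
      (j == 0 :> nat) && [forall k, (p k == 0 :> nat) ==> (v k < M)] |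
      (j == n :> nat) && [forall k, (p k == n' :> nat) ==> (0 < v k)]].

Lemma pivot_mid v p (j : 'I_n.+1) :
  0 < j < n -> pivot ((v, p), j) = ((v, p * adj_swap j), j)%g.
Proof. by rewrite /pivot => ->. Qed.

Lemma pivot_first v p (j : 'I_n.+1) : (j : nat) = 0 -> pivot ((v, p), j) =
  (([ffun k : 'I_n => inord (v k + (p k == 0 :> nat))], p * shift^-1), ord_max)%g.
Proof. by rewrite /pivot => ->. Qed.

Lemma pivot_last v p (j : 'I_n.+1) : (j : nat) = n -> pivot ((v, p), j) =
  (([ffun k : 'I_n => inord (v k - (p k == n' :> nat))], p * shift), ord0)%g.
Proof. by rewrite /pivot => ->; rewrite ltnn andbF. Qed.

Lemma inner_facetP v p (j : 'I_n.+1) : inner_facet ((v, p), j) ->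
  [\/ 0 < j < n,
      (j : nat) = 0 /\ (forall k, (p k : nat) = 0 -> v k < M) |
      (j : nat) = n /\ (forall k, (p k : nat) = n' -> 0 < v k)].
Proof.
case/or3P => [? | /andP [/eqP ? /forallP v_lt] | /andP [/eqP ? /forallP v_gt0]].
- by constructor 1.
- by constructor 2; split => // k pk; move: (v_lt k); rewrite pk.
- by constructor 3; split => // k pk; move: (v_gt0 k); rewrite pk eqxx.
Qed.

Lemma vertex_pivot t : inner_facet t -> forall i : 'I_n.+1, i != t.2 ->
  exists2 i' : 'I_n.+1, i' != (pivot t).2 &
    vertex (pivot t).1.1 (pivot t).1.2 i' = vertex t.1.1 t.1.2 i.
Proof.
case: t => [[v p] j] /inner_facetP [j_mid | [j0 v_lt] | [jn v_gt0]] i ij;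
  have ij' : (i : nat) != j by rewrite val_eqE.
all: have i_le := ltn_ord i.
- rewrite pivot_mid //; exists i => //.
  by apply/ffunP => k; rewrite !ffunE permM adj_swap_lt.
- rewrite pivot_first // /=; exists (inord i.-1).
    by rewrite -(inj_eq val_inj) /= inordK; lia.
  apply/ffunP => k; rewrite !ffunE permM shiftVE !inordK;
    move: (v_lt k) (ltn_ord (v k)) (ltn_ord (p k)); case: (p k =P 0 :> nat); lia.
- rewrite pivot_last // /=; exists (inord i.+1).
    by rewrite -(inj_eq val_inj) /= inordK; lia.
  apply/ffunP => k; rewrite !ffunE permM shiftE !inordK;
    move: (v_gt0 k) (ltn_ord (v k)) (ltn_ord (p k)); case: (p k =P n' :> nat); lia.
Qed.

Lemma pivotK t : inner_facet t -> pivot (pivot t) = t.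
Proof.
case: t => [[v p] j] /inner_facetP [j_mid | [j0 v_lt] | [jn v_gt0]].
- by rewrite !pivot_mid // -mulgA tperm2 mulg1.
- rewrite pivot_first // pivot_last // mulgVK; congr (_, _, _).
    apply/ffunP => k; apply: ord_inj; rewrite !ffunE permM shiftVE.
    rewrite inordK ?(leq_ltn_trans (leq_subr _ _)) // inordK;
    (* [set] merges two syntactically different copies of [v k], which [lia]
       would otherwise treat as unrelated atoms. *)
    move: (v_lt k) (ltn_ord (v k)) (ltn_ord (p k)); set vk := (v k : nat);
    case: (p k =P 0 :> nat); lia.
  by apply: ord_inj; rewrite j0.
- rewrite pivot_last // pivot_first // mulgK; congr (_, _, _).
    apply/ffunP => k; apply: ord_inj.
    rewrite !ffunE permM shiftE inordK ?ltnS // inordK;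
    move: (v_gt0 k) (ltn_ord (v k)) (ltn_ord (p k)); set vk := (v k : nat);
    case: (p k =P n' :> nat); lia.
  by apply: ord_inj; rewrite jn.
Qed.

Lemma inner_pivot t : inner_facet t -> inner_facet (pivot t).
Proof.
case: t => [[v p] j] /inner_facetP [j_mid | [j0 v_lt] | [jn v_gt0]].
- by rewrite pivot_mid //= j_mid.
- rewrite pivot_first //= ltnn eqxx; apply/forallP => k; apply/implyP.
  rewrite !ffunE permM shiftVE inordK;
  move: (v_lt k) (ltn_ord (v k)) (ltn_ord (p k)); case: (p k =P 0 :> nat); lia.
- rewrite pivot_last //= orbF; apply/forallP => k; apply/implyP.
  rewrite !ffunE permM shiftE inordK;
  move: (v_gt0 k) (ltn_ord (v k)) (ltn_ord (p k)); case: (p k =P n' :> nat); lia.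
Qed.

Lemma pivot_neq t : inner_facet t -> pivot t != t.
Proof.
case: t => [[v p] j] /inner_facetP [j_mid | [j0 _] | [jn _]]; apply/eqP.
- rewrite pivot_mid // => -[]; rewrite -[RHS]mulg1 => /mulgI /permP /(_ (inord j)).
  by rewrite tpermR perm1 => /(congr1 (@nat_of_ord _)); rewrite !inordK; lia.
- by rewrite pivot_first // => -[_ _] /(congr1 val) /=; rewrite j0.
- by rewrite pivot_last // => -[_ _] /(congr1 val) /=; rewrite jn.
Qed.

End Pivot.

Definition door_facet n lab (t : ({ffun 'I_n -> 'I_M.+1} * 'S_n) * 'I_n.+1) :=
  door (simplex_labels lab t.1.1 t.1.2) t.2.

Section SpernerStep.
Variables (n' : nat) (lab : {ffun 'I_n'.+1 -> nat} -> nat).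
Local Notation n := n'.+1.
Local Notation facet := (({ffun 'I_n -> 'I_M.+1} * 'S_n) * 'I_n.+1)%type.

Lemma door_pivot t : inner_facet t -> door_facet lab t -> door_facet lab (pivot t).
Proof.
move=> inner /forallP Dt; apply/forallP => l.
have [i /andP [it /eqP li]] := existsP (Dt l).
have [i' i'p vi] := vertex_pivot inner it.
by apply/existsP; exists i'; rewrite i'p -li /simplex_labels vi eqxx.
Qed.

Lemma inner_doors_even :
  ~~ odd #|[set t : facet | door_facet lab t] :&: [set t | inner_facet t]|.
Proof.
apply: (@fixfree_involution_card_even _ (@pivot n')) => t;
  rewrite !inE => /andP [Dt inner].
- by rewrite door_pivot ?inner_pivot.
- exact: pivotK.
- exact: pivot_neq.
Qed.

Definition top_lift (w : {ffun 'I_n' -> nat}) : {ffun 'I_n -> nat} :=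
  [ffun k => if unlift ord_max k is Some k' then w k' else M.+1].

Definition top_labelling w := lab (top_lift w).

(* [top_simplex s] is the simplex of the grid whose facet opposite vertex 0 is
   the simplex s of the face {x | x_(n-1) = M + 1}. *)
Definition top_simplex (s : {ffun 'I_n' -> 'I_M.+1} * 'S_n') : facet :=
  (([ffun k => if unlift ord_max k is Some k' then s.1 k' else ord_max],
    lift_perm ord_max ord0 s.2), ord0).

Lemma top_lift_in_grid w : in_grid w -> in_grid (top_lift w).
Proof. by move=> w_grid k; rewrite ffunE; case: unliftP. Qed.

Hypothesis lab_sperner : sperner_labelling lab.

Lemma sperner_top_labelling : sperner_labelling top_labelling.
Proof.
have [lab_le lab_bottom lab_top] := lab_sperner; split => [u | u k | u k] u_grid.
- have := lab_top _ ord_max (top_lift_in_grid u_grid).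
  by rewrite ffunE unlift_none; apply.
- have := lab_bottom _ (lift ord_max k) (top_lift_in_grid u_grid).
  by rewrite ffunE liftK lift_max; apply.
- have := lab_top _ (lift ord_max k) (top_lift_in_grid u_grid).
  by rewrite ffunE liftK lift_max; apply.
Qed.

Lemma top_lift_vertex s (i : nat) :
  top_lift (vertex s.1 s.2 i) = vertex (top_simplex s).1.1 (top_simplex s).1.2 i.+1.
Proof.
apply/ffunP => k; rewrite !ffunE; case: unliftP => [k' -> | ->] /=.
  by rewrite ffunE lift_perm_lift.
by rewrite lift_perm_id addn1.
Qed.

Lemma door_top_simplex s :
  door_facet lab (top_simplex s) =
  fully_labelled (simplex_labels top_labelling s.1 s.2).
Proof.
apply/forallP/forallP => D l; apply/existsP.
  have [i /andP [i0 /eqP <-]] := existsP (D l).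
  move: i0; rewrite eq_sym => /unlift_some [i' -> _]; exists i'.
  by rewrite /simplex_labels /top_labelling top_lift_vertex lift0.
have [i /eqP <-] := existsP (D l).
exists (lift ord0 i); rewrite eq_sym neq_lift /=.
by rewrite /simplex_labels /top_labelling top_lift_vertex lift0 eqxx.
Qed.

Lemma top_simplex_inj : injective top_simplex.
Proof.
move=> [u q] [u' q'] [] /ffunP eq_u /permP eq_q; congr (_, _).
  by apply/ffunP => k; have := eq_u (lift ord_max k); rewrite !ffunE liftK.
apply/permP => k; have := eq_q (lift ord_max k).
by rewrite !lift_perm_lift => /lift_inj.
Qed.

Lemma top_simplex_not_inner s : ~~ inner_facet (top_simplex s).
Proof.
rewrite /= orbF negb_forall; apply/existsP; exists ord_max.
by rewrite lift_perm_id ffunE unlift_none /= ltnn.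
Qed.

Lemma boundary_door_first t : door_facet lab t -> ~~ inner_facet t -> t.2 = ord0.
Proof.
case: t => [[v p] j] /forallP Dt not_inner; apply: ord_inj => /=.
have [_ lab_bottom _] := lab_sperner.
apply: contraNeq not_inner => j_n0; apply/or3P.
have [j_lt | j_n] := ltnP j n; first by apply: Or31; rewrite lt0n j_n0.
apply: Or33; rewrite eqn_leq j_n -ltnS ltn_ord /=.
apply/forallP => k; apply/implyP => /eqP pk; rewrite lt0n; apply/eqP => vk.
have [i /andP [ij /eqP li]] := existsP (Dt k).
have i_lt : i < n.
  by move: ij (ltn_ord i) (ltn_ord j) j_n; rewrite -val_eqE /=; lia.
have := lab_bottom _ k (vertex_in_grid v p i).
rewrite ffunE vk pk ltnNge -ltnS i_lt.
by rewrite -/(simplex_labels lab v p i) li eqxx => /(_ erefl).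
Qed.

Lemma boundary_door_top t : door_facet lab t -> ~~ inner_facet t -> t.2 = ord0 ->
  t.1.2 ord_max = ord0 /\ t.1.1 ord_max = ord_max.
Proof.
case: t => [[v p] j] /forallP Dt /[swap] /= j0; rewrite j0 /= orbF negb_forall.
have [_ _ lab_top] := lab_sperner.
case/existsP => k; rewrite negb_imply -leqNgt => /andP [/eqP pk vk].
have vk_M : (v k : nat) = M by apply/eqP; rewrite eqn_leq vk -ltnS ltn_ord.
have [i /andP [ij /eqP li]] := existsP (Dt ord_max).
have i_gt0 : 0 < i by rewrite lt0n; move: ij; rewrite j0 -val_eqE.
have := lab_top _ k (vertex_in_grid v p i); rewrite ffunE vk_M pk i_gt0 addn1.
rewrite -/(simplex_labels lab v p i) li => /(_ erefl) k_max.
have {}k_max : k = ord_max.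
  by apply: ord_inj; move: k_max (ltn_ord k); rewrite /=; lia.
by subst k; split; apply: ord_inj.
Qed.

Lemma boundary_doorsE :
  [set t : facet | door_facet lab t] :\: [set t | inner_facet t] =
  top_simplex @: [set s | fully_labelled (simplex_labels top_labelling s.1 s.2)].
Proof.
apply/setP => t; rewrite !inE.
apply/andP/imsetP => [[not_inner Dt] | [s]]; last first.
  by rewrite inE => full ->; rewrite top_simplex_not_inner door_top_simplex.
have j0 := boundary_door_first Dt not_inner.
have [/lift_perm_surj [q p_eq] v_max] := boundary_door_top Dt not_inner j0.
case: t j0 p_eq v_max Dt {not_inner} => [[v p] j] /= -> -> v_max Dt.
pose u := [ffun k => v (lift ord_max k)].
have t_top : (v, lift_perm ord_max ord0 q, ord0) = top_simplex (u, q).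
  congr (_, _, _); apply/ffunP => k; rewrite !ffunE.
  by case: unliftP => [k' -> | ->]; rewrite ?ffunE.
by exists (u, q); rewrite // inE -door_top_simplex -t_top.
Qed.

End SpernerStep.

Definition full_simplices n (lab : {ffun 'I_n -> nat} -> nat) :=
  [set s : {ffun 'I_n -> 'I_M.+1} * 'S_n |
    fully_labelled (simplex_labels lab s.1 s.2)].

Lemma odd_full_simplices n (lab : {ffun 'I_n -> nat} -> nat) :
  (forall u, in_grid u -> lab u <= n) ->
  odd #|full_simplices lab| = odd #|[set t | door_facet lab t]|.
Proof.
move=> lab_le.
rewrite !odd_cardE -(pair_bigA _ (fun s j => door_facet lab (s, j))) /=.
apply: eq_bigr => -[v p] _.
by rewrite -odd_cardE /door_facet /= odd_doors // => i; apply/lab_le/vertex_in_grid.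
Qed.

Theorem sperner n (lab : {ffun 'I_n -> nat} -> nat) :
  sperner_labelling lab -> odd #|full_simplices lab|.
Proof.
elim: n lab => [|n IH] lab lab_sperner; have [lab_le _ _] := lab_sperner.
  suff -> : full_simplices lab = [set: _]%SET.
    by rewrite cardsT card_prod card_ffun !card_ord card_Sn.
  apply/setP => -[v p]; rewrite !inE; apply/forallP => l; apply/existsP; exists ord0.
  by move: (lab_le _ (vertex_in_grid v p 0)); rewrite (ord1 l) leqn0.
rewrite odd_full_simplices // -(cardsID [set t | inner_facet t]) oddD.
rewrite (negPf (inner_doors_even lab)) boundary_doorsE // card_imset //.
  exact/IH/sperner_top_labelling.
exact: top_simplex_inj.
Qed.

End KuhnTriangulation.

Local Open Scope classical_set_scope.
Local Open Scope ring_scope.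

Lemma lebesgue_number (R : realType) (T : normedModType R) (I : finType)
    (C : I -> set T) (K : set T) :
  compact K -> (forall i, closed (C i)) ->
  exists2 d : R, 0 < d & forall y, K y -> exists2 x, K x &
    forall i z, ball y d z -> C i z -> C i x.
Proof.
move=> K_compact C_closed.
have separating x : exists r : R, 0 < r /\ forall i z, ball x r z -> C i z -> C i x.
  have : \forall z \near x, forall i, C i z -> C i x.
    apply: filter_forall => i; have [Cx | nCx] := pselect (C i x); first exact: nearW.
    have : nbhs x (~` C i) by apply: open_nbhs_nbhs; split; first exact: closed_openC.
    by apply: filterS => z nCz /nCz.
  by move=> /nbhs_ballP [r /= r_gt0 rC]; exists r; split => // i z /rC; apply.
have [r /all_and2 [r_gt0 rC]] := choice separating.
move: K_compact; rewrite compact_cover => /(_ _ K (fun x => ball x (r x / 2))).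
case=> [x _ | x Kx | D DK KD]; first exact: ball_open.
  by exists x => //; apply: ballxx; rewrite divr_gt0.
exists (\big[Num.min/1]_(x <- finmap.enum_fset D) (r x / 2)).
  by apply: lt_bigmin => // x _; rewrite divr_gt0.
move=> y /KD [x xD xy]; exists x; first by have := DK x xD; rewrite inE.
move=> i z yz; apply: (rC x); apply: le_ball (ball_triangle xy yz).
by rewrite [leRHS](splitr (r x)) lerD2l ge_bigmin_seq.
Qed.

Lemma rV_ball (R : realType) n (x y : 'rV[R]_n) (e : R) :
  0 < e -> (forall k, `|x ord0 k - y ord0 k| < e) -> ball x e y.
Proof. by move=> e_gt0 xy; split => // i k; rewrite (ord1 i); apply: xy. Qed.

Lemma coord_le_edist (R : realType) n (x y : 'rV[R]_n) k :
  `|x ord0 k - y ord0 k| <= Defs.edist x y.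
Proof.
rewrite /Defs.edist /Defs.enorm -sqrtr_sqr ler_sqrt; last first.
  by apply: sumr_ge0 => i _; exact: sqr_ge0.
by rewrite (bigD1 k) //= !mxE lerDl; apply: sumr_ge0 => i _; exact: sqr_ge0.
Qed.

Definition cube (R : realType) n (a : R) : set 'rV[R]_n :=
  [set x | forall k, - a <= x ord0 k <= a].
Arguments cube {R} n a.

Lemma cube_compact (R : realType) n (a : R) : compact (cube n a).
Proof.
rewrite (_ : cube n a = [set x | forall k, `[- a, a]%classic (x ord0 k)]).
  exact: (@rV_compact _ _ (fun=> `[- a, a]%classic) (fun=> @segment_compact R _ _)).
by apply/seteqP; split => x x_cube k; have := x_cube k; rewrite /= in_itv.
Qed.

Lemma cube_sub_unit_ball (R : realType) n (a : R) :
  a ^+ 2 * n%:R <= 1 -> cube n a `<=` @unit_ball R n.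
Proof.
move=> a_small x x_cube; rewrite /unit_ball /= /Defs.enorm -sqrtr1 ler_sqrt ?ler01 //.
apply: le_trans a_small; rewrite mulr_natr -[n in _ *+ n]card_ord -sumr_const.
by apply: ler_sum => k _; have /andP [? ?] := x_cube k; nra.
Qed.

Section LebesgueCovering.
Variables (R : realType) (n : nat) (I : finType) (a : R) (C : I -> set 'rV[R]_n).
Hypotheses (a_gt0 : 0 < a) (C_closed : forall i, closed (C i)).
Hypothesis C_cover : cube n a `<=` \bigcup_i C i.
Hypothesis C_not_across : forall i k x y,
  cube n a x -> cube n a y -> C i x -> C i y -> x ord0 k = - a -> y ord0 k != a.

Definition meets_bottom_face i (k : 'I_n) :=
  exists2 z, cube n a z & C i z /\ z ord0 k = - a.

Definition face_label i : nat :=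
  find (fun k : 'I_n => ~~ `[< meets_bottom_face i k >]) (enum 'I_n).

Lemma face_label_le i : (face_label i <= n)%N.
Proof. by rewrite -[n in (_ <= n)%N]size_enum_ord find_size. Qed.

Lemma face_label_missed i (k : 'I_n) : face_label i = k -> ~ meets_bottom_face i k.
Proof.
move=> label_k.
have has_missed : has (fun k => ~~ `[< meets_bottom_face i k >]) (enum 'I_n).
  by rewrite has_find size_enum_ord -/(face_label i) label_k.
move: (nth_find k has_missed).
by rewrite -/(face_label i) label_k nth_ord_enum => /asboolPn.
Qed.

Lemma face_label_met i (k : 'I_n) : (k < face_label i)%N -> meets_bottom_face i k.
Proof. by move=> /(before_find k); rewrite nth_ord_enum => /negbFE/asboolP. Qed.

Section Grid.
Variables (M : nat) (h : R).
Hypotheses (h_gt0 : 0 < h) (h_fill : h * M.+1%:R = 2 * a).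

Definition grid_point (u : {ffun 'I_n -> nat}) : 'rV[R]_n :=
  \row_k (- a + h * (u k)%:R).

Lemma grid_point_cube u : in_grid M u -> cube n a (grid_point u).
Proof.
move=> u_grid k; rewrite mxE.
have step_ge0 : 0 <= h * (u k)%:R by rewrite mulr_ge0 ?ler0n ?ltW.
have step_le : h * (u k)%:R <= 2 * a.
  by rewrite -h_fill ler_pM2l // ler_nat; apply: u_grid.
by apply/andP; split; lra.
Qed.

Variable piece : {ffun 'I_n -> nat} -> I.
Hypothesis piece_cover : forall u, in_grid M u -> C (piece u) (grid_point u).

Lemma sperner_face_label : sperner_labelling M (fun u => face_label (piece u)).
Proof.
split=> [u _ | u k u_grid uk0 | u k u_grid ukM]; first exact: face_label_le.
  apply/eqP => /face_label_missed; apply; exists (grid_point u).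
    exact: grid_point_cube.
  by split; [exact: piece_cover | rewrite mxE uk0 mulr0 addr0].
rewrite leqNgt; apply/negP => /face_label_met [z z_cube [Cz zk]].
have := C_not_across z_cube (grid_point_cube u_grid) Cz (piece_cover u_grid) zk.
by rewrite mxE ukM h_fill (_ : - a + 2 * a = a) ?eqxx //; ring.
Qed.

Variable d : R.
Hypothesis h_lt_d : h < d.
Hypothesis lebesgue_d : forall y, cube n a y -> exists2 x, cube n a x &
  forall i z, ball y d z -> C i z -> C i x.

Lemma full_simplex_common_point v p :
  (v, p) \in full_simplices M (fun u => face_label (piece u)) ->
  exists2 x, cube n a x & (n < #|[set i | `[< C i x >]]|)%N.
Proof.
rewrite inE => /forallP full.
have /fin_all_exists [vert vertP] :
    forall l : 'I_n.+1, exists i : 'I_n.+1, face_label (piece (vertex v p i)) = l.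
  by move=> l; have [i /eqP] := existsP (full l); exists i.
have [x x_cube x_near] := lebesgue_d (grid_point_cube (vertex_in_grid v p 0)).
exists x => //.
pose vert_piece l := piece (vertex v p (vert l)).
have vert_piece_inj : injective vert_piece.
  by move=> l l' eq_piece; apply: ord_inj; rewrite -vertP -[RHS]vertP; congr face_label.
rewrite -[n.+1]card_ord -(card_imset _ vert_piece_inj); apply: subset_leq_card.
apply/fintype.subsetP => _ /imsetP [l _ ->]; rewrite inE; apply/asboolP.
apply: x_near (piece_cover (vertex_in_grid _ _ _)); apply: rV_ball => [|k].
  exact: lt_trans h_lt_d.
rewrite !mxE !ffunE addn0 natrD (_ : _ - _ = - (h * (p k < vert l)%:R)); last by ring.
rewrite normrN; apply: le_lt_trans h_lt_d.
by case: (_ < _)%N; rewrite ?mulr1 ?mulr0 ?normr0 ?gtr0_norm // ltW.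
Qed.

End Grid.

Theorem lebesgue_covering :
  exists2 x, cube n a x & (n < #|[set i | `[< C i x >]]|)%N.
Proof.
have [d d_gt0 lebesgue_d] := lebesgue_number (@cube_compact _ n a) C_closed.
pose M := Num.Def.archi_bound (2 * a / d).
pose h := 2 * a / M.+1%:R.
have h_gt0 : 0 < h by rewrite divr_gt0 ?mulr_gt0.
have h_fill : h * M.+1%:R = 2 * a by rewrite divfK ?pnatr_eq0.
have h_lt_d : h < d.
  rewrite ltr_pdivrMr ?ltr0Sn // -ltr_pdivrMl // mulrC.
  by apply: lt_trans (archi_boundP _) _; rewrite ?ltr_nat ?divr_ge0 ?mulr_ge0 ?ltW.
have [i0 _ _] : (\bigcup_i C i) 0.
  by apply: C_cover => k; rewrite mxE oppr_le0 andbb; exact: ltW.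
have /choice [piece piece_cover] : forall u : {ffun 'I_n -> nat},
    exists i, in_grid M u -> C i (grid_point h u).
  move=> u; have [u_grid | u_off] := pselect (in_grid M u); last by exists i0.
  by have [i _ Ci] := C_cover (grid_point_cube h_gt0 h_fill u_grid); exists i.
have /odd_gt0/card_gt0P [[v p] full] :=
  sperner (sperner_face_label h_gt0 h_fill piece_cover).
by have := full_simplex_common_point h_gt0 h_fill piece_cover h_lt_d lebesgue_d full.
Qed.

End LebesgueCovering.

Theorem corollary1p4 (R : realType) (n : nat) (hn : (1 <= n)%N) :
  ~ exists (I : finType) (P : I -> set 'rV[R]_n),
      [/\ decomposition (@unit_ball R n) P,
          (forall i, diam_lt (P i) (2 / Num.sqrt (n%:R))) &
          (forall x, @unit_ball R n x -> (meet_count P x <= n)%N)].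
Proof.
move=> [I [P [[P_closed _ _ P_cover] P_diam P_meet]]].
have /choice [C /all_and2 [C_closed P_eq]] := P_closed.
pose a : R := (Num.sqrt n%:R)^-1.
have a_gt0 : 0 < a by rewrite invr_gt0 sqrtr_gt0 ltr0n.
have cube_ball : cube n a `<=` @unit_ball R n.
  apply: cube_sub_unit_ball.
  by rewrite exprVn sqr_sqrtr ?ler0n // mulVf ?pnatr_eq0 -?lt0n.
have P_cube i x : cube n a x -> C i x -> P i x.
  by rewrite P_eq => x_cube Cx; split; first exact: cube_ball.
have C_cover : cube n a `<=` \bigcup_i C i.
  by move=> x /cube_ball /P_cover [i]; rewrite P_eq => -[_ Cx]; exists i.
have C_not_across i k y z : cube n a y -> cube n a z -> C i y -> C i z ->
    y ord0 k = - a -> z ord0 k != a.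
  move=> y_cube z_cube Cy Cz yk; apply/eqP => zk.
  have [e e_lt e_diam] : diam_lt (P i) (2 * a) := P_diam i.
  have := e_diam _ _ (P_cube _ _ y_cube Cy) (P_cube _ _ z_cube Cz).
  move/(le_trans (coord_le_edist y z k)); rewrite yk zk -opprD normrN ger0_norm; lra.
have [x x_cube many] := lebesgue_covering a_gt0 C_closed C_cover C_not_across.
have := leq_ltn_trans (P_meet x (cube_ball _ x_cube)) many.
rewrite ltnNge => /negP; apply; apply: subset_leq_card.
by apply/fintype.subsetP => i; rewrite !inE => /asboolP Cx; exact: P_cube _ _ x_cube Cx.
Qed.
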